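(* Let $C$ be a hyperelliptic curve of genus $3$ over $\mathbb{C}$ given by $y^2=f(x)$ with $f$ a separable polynomial of degree $8$. Let $w\in\mathbb{C}$ with $f(w)\neq0$ and let $P_m^w$ ($m\in\{1,2\}$) be one of the two points of $C$ over $x=w$. Let $f_{w,4,m}(x)$ be the degree-$4$ Taylor polynomial at $x=w$ of the local branch of $y$ (as a function of $x$) through $P_m^w$. Then the $2$-gap sequence of $P_m^w$ is $\{1,2,3,4,5,n_6\}$ with $n_6=v_{P_m^w}(y-f_{w,4,m}(x))+1$. Consequently, if $n_6>6$, then $P_m^w$ is a $2$-Weierstrass point with $2$-weight $n_6-6$.
   Context: $v_P$ denotes the order of vanishing (valuation) at the point $P$. For a point $P$ on a smooth projective curve $C$ of genus $g$ and $q\ge1$, let $d_q=\dim H^0(C,(\Omega^1)^q)$ (holomorphic $q$-differentials; $d_q=(g-1)(2q-1)$ for $q\ge2$, so $d_2=6$ for $g=3$). Choose a basis $\psi_1,\dots,\psi_{d_q}$ with strictly increasing orders of vanishing at $P$ and set $n_i=\mathrm{ord}_P(\psi_i)+1$; $\{n_1,\dots,n_{d_q}\}$ is the $q$-gap sequence of $P$, $w^{(q)}(P)=\sum_i(n_i-i)$ is its $q$-weight, and $P$ is a $q$-Weierstrass point if $w^{(q)}(P)>0$. *)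

(* Concrete, algebraic model of the hyperelliptic curve
   y^2 = f(x) (deg f = 8) over an algebraically closed field F of char 0
   (numClosedFieldType, e.g. algC or complex R), via local expansions
   (formal Laurent series) at every point of the smooth projective model. *)
From HB Require Import structures.
From mathcomp Require Import all_boot all_order all_algebra all_field.
Set Implicit Arguments. Unset Strict Implicit. Unset Printing Implicit Defensive.
Import Order.TTheory GRing.Theory Num.Theory.
Local Open Scope ring_scope.

Section Hyper.
Variable F : numClosedFieldType.

(* formal power series: coefficient functions *)
Definition ser := nat -> F.
Definition smul (s1 s2 : ser) : ser := fun n => \sum_(i < n.+1) s1 i * s2 (n - i)%N.

(* formal Laurent series  t^lsh * lco(t) *)
Record lser := LS { lsh : int; lco : ser }.

Definition lcoef (a : lser) (z : int) : F :=
  if lsh a <= z then lco a `|z - lsh a|%N else 0.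
Definition lmul (a b : lser) : lser := LS (lsh a + lsh b) (smul (lco a) (lco b)).
Definition ladd (a b : lser) : lser :=
  let m := if lsh a <= lsh b then lsh a else lsh b in
  LS m (fun n => lcoef a (m + n%:Z) + lcoef b (m + n%:Z)).
Definition lconst (c : F) : lser := LS 0 (fun n => if n == 0%N then c else 0).
Definition lpow (a : lser) (n : nat) : lser := iter n (lmul a) (lconst 1).
Definition leval (p : {poly F}) (X : lser) : lser :=
  \big[ladd/lconst 0]_(i < size p) lmul (lconst p`_i) (lpow X i).

Definition lorder (a : lser) (z : int) : Prop :=
  lcoef a z != 0 /\ forall z', z' < z -> lcoef a z' = 0.

(* the power series square root s of g with s(0) = c (c^2 = g 0 <> 0) *)
Fixpoint sqs_seq (g : ser) (c : F) (n : nat) : seq F :=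
  match n with
  | 0 => [::]
  | n'.+1 => let s := sqs_seq g c n' in
      rcons s (if n' is 0 then c
               else (g n' - \sum_(1 <= i < n') s`_i * s`_(n' - i)) / (c *+ 2))
  end.
Definition sqs (g : ser) (c : F) : ser := fun n => (sqs_seq g c n.+1)`_n.

(* points of the smooth projective model of y^2 = f(x), deg f = 8:
   affine points (a,b), and the two points at infinity, labelled by the
   value c of y/x^4 there (c^2 = lead_coef f) *)
Inductive hpoint := Aff of F & F | Inf of F.

Definition on_curve (f : {poly F}) (P : hpoint) : Prop :=
  match P with
  | Aff a b => b ^+ 2 = f.[a]
  | Inf c => c ^+ 2 = lead_coef f
  end.

Definition coefs (p : {poly F}) : ser := fun n => p`_n.

(* local expansions (x(t), y(t), dx/dt) in a local parameter t at P *)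
Definition xs (P : hpoint) : lser :=
  match P with
  | Aff a b => if b != 0 then LS 0 (coefs (a%:P + 'X))
               else LS 0 (coefs (a%:P + 'X ^+ 2))
  | Inf c => LS (-1) (coefs 1)
  end.

Definition ys (f : {poly F}) (P : hpoint) : lser :=
  match P with
  | Aff a b =>
      if b != 0 then LS 0 (sqs (coefs (f \Po ('X + a%:P))) b)
      else let h := f %/ ('X - a%:P) in
           LS 1 (sqs (fun n => if odd n then 0 else (h \Po ('X + a%:P))`_n./2)
                     (sqrtC h.[a]))
  | Inf c => LS (-4) (sqs (fun n => if (n <= 8)%N then f`_(8 - n) else 0) c)
  end.

Definition dxs (P : hpoint) : lser :=
  match P with
  | Aff a b => if b != 0 then lconst 1 else LS 1 (coefs 2%:P)
  | Inf c => LS (-2) (coefs (-1))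
  end.

(* element (P0 + P1 y) / Q of the function field F(x)[y]/(y^2 - f) *)
Record rfun := RF { rP0 : {poly F}; rP1 : {poly F}; rQ : {poly F} }.

Definition rfun_nonzero (h : rfun) : Prop := rQ h != 0 /\ (rP0 h != 0 \/ rP1 h != 0).

Definition qnum (f : {poly F}) (q : nat) (h : rfun) (P : hpoint) : lser :=
  lmul (ladd (leval (rP0 h) (xs P)) (lmul (leval (rP1 h) (xs P)) (ys f P)))
       (lpow (dxs P) q).
Definition qden (h : rfun) (P : hpoint) : lser := leval (rQ h) (xs P).

(* ord_P (h dx^q) = z  (for q = 0 this is the valuation v_P(h)) *)
Definition qord (f : {poly F}) (q : nat) (h : rfun) (P : hpoint) (z : int) : Prop :=
  exists zn zd, [/\ lorder (qnum f q h P) zn, lorder (qden h P) zd & z = zn - zd].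

Definition holo_qdiff (f : {poly F}) (q : nat) (h : rfun) : Prop :=
  rQ h != 0 /\
  forall P, on_curve f P -> forall z, qord f q h P z -> 0 <= z.

(* n belongs to the q-gap sequence of P: n = ord_P(psi) + 1 for some nonzero
   holomorphic q-differential psi (the set of these orders is exactly the set of
   orders of a basis with strictly increasing orders) *)
Definition in_qgap (f : {poly F}) (q : nat) (P : hpoint) (n : nat) : Prop :=
  exists h, [/\ rfun_nonzero h, holo_qdiff f q h & qord f q h P (n%:Z - 1)].

(* q-weight of a gap sequence listed increasingly n_1 < ... < n_d *)
Definition qweight (s : seq nat) : nat := (\sum_(i < size s) (nth 0 s i - i.+1))%N.

(* degree-4 Taylor polynomial at x = w of the branch y(x) through (w,b), b <> 0 *)
Definition taylor4 (f : {poly F}) (w b : F) : {poly F} :=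
  \sum_(k < 5) sqs (coefs (f \Po ('X + w%:P))) b k *: ('X - w%:P) ^+ k.

End Hyper.

From HB Require Import structures.
From mathcomp Require Import all_boot all_order all_algebra all_field.
From mathcomp Require Import zify ring.
From Stdlib Require Import Classical.
Set Implicit Arguments. Unset Strict Implicit. Unset Printing Implicit Defensive.
Import Order.TTheory GRing.Theory Num.Theory.
Local Open Scope ring_scope.

(* Every holomorphic 2-differential on C is (p(x) + r y) dx^2 / f(x) with deg p <= 4 and
   r constant.  Indeed, writing it as (P0 + P1 y) dx^2 / Q, holomorphy at the two points
   over each x = a (where [y] and [-y] are the two branches) and at the ramification points
   (local parameter t = sqrt(x - a), with P0 even and P1 y odd in t) gives
   Q | P0 f and Q | P1 f, and holomorphy at the two points at infinity bounds the degrees;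
   conversely all these are holomorphic.  At P = (w, b) with f(w) <> 0 the factor dx^2/f
   is a unit and x - w is a local parameter, so the orders at P are those of
   p(x) + r y = Z(x) + r (y - f_{w,4}(x)) with deg Z <= 4: they are at most 4 when Z <> 0,
   and equal ord_P (y - f_{w,4}(x)) = n6 - 1 otherwise. *)

Lemma add_sub_eq0 (R : numDomainType) (x y : R) :
  x + y = 0 -> x - y = 0 -> x = 0 /\ y = 0.
Proof.
move=> hD hB.
have : x *+ 2 = (x + y) + (x - y) by rewrite mulr2n; ring.
rewrite hD hB addr0 => /eqP; rewrite mulrn_eq0 /= => /eqP hx.
by split=> //; move: hD; rewrite hx add0r.
Qed.

(** * Formal power series *)

Section PowerSeries.
Variable F : numClosedFieldType.
Implicit Types (u v w : ser F) (p q : {poly F}).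

Definition sadd u v : ser F := fun n => u n + v n.
Definition sopp u : ser F := fun n => - u n.
Definition sshift u : ser F := fun n => if n is n'.+1 then u n' else 0.
Definition ser_vanish m u := forall n, (n < m)%N -> u n = 0.
Definition ser_ord u k := u k != 0 /\ ser_vanish k u.

Lemma smul_polyE u v p q n :
  (forall i, (i <= n)%N -> u i = p`_i) -> (forall i, (i <= n)%N -> v i = q`_i) ->
  smul u v n = (p * q)`_n.
Proof.
move=> hu hv; rewrite /smul coefM; apply: eq_bigr => i _.
have hi : (i <= n)%N by rewrite -ltnS.
by rewrite hu // hv // leq_subr.
Qed.

Lemma eq_smul u u' v v' n : (forall i, (i <= n)%N -> u i = u' i) ->
  (forall i, (i <= n)%N -> v i = v' i) -> smul u v n = smul u' v' n.
Proof.
move=> hu hv; apply: eq_bigr => i _.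
have hi : (i <= n)%N by rewrite -ltnS.
by rewrite hu // hv // leq_subr.
Qed.

Lemma coef_ser_poly u n i : (i <= n)%N -> u i = (\poly_(j < n.+1) u j)`_i.
Proof. by move=> hi; rewrite coef_poly ltnS hi. Qed.

Lemma smulC u v n : smul u v n = smul v u n.
Proof.
rewrite (smul_polyE (@coef_ser_poly u n) (@coef_ser_poly v n)).
by rewrite (smul_polyE (@coef_ser_poly v n) (@coef_ser_poly u n)) mulrC.
Qed.

Lemma smulA u v w n : smul (smul u v) w n = smul u (smul v w) n.
Proof.
have trM (x y : ser F) i : (i <= n)%N ->
    smul x y i = (\poly_(j < n.+1) x j * \poly_(j < n.+1) y j)`_i.
  by move=> hi; apply: smul_polyE => j hj; apply: coef_ser_poly; apply: leq_trans hi.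
rewrite (smul_polyE (trM u v) (@coef_ser_poly w n)).
by rewrite (smul_polyE (@coef_ser_poly u n) (trM v w)) mulrA.
Qed.

Lemma smulAC u v w n : smul (smul u v) w n = smul (smul u w) v n.
Proof.
rewrite smulA (@eq_smul u u (smul v w) (smul w v)) // ?smulA //.
by move=> i _; rewrite smulC.
Qed.

Lemma smulDl u v w n : smul (sadd u v) w n = smul u w n + smul v w n.
Proof. by rewrite /smul -big_split; apply: eq_bigr => i _; rewrite mulrDl. Qed.

Lemma smulNl u w n : smul (sopp u) w n = - smul u w n.
Proof. by rewrite /smul -sumrN; apply: eq_bigr => i _; rewrite mulNr. Qed.

Lemma smulNr u w n : smul u (sopp w) n = - smul u w n.
Proof. by rewrite smulC smulNl smulC. Qed.

Lemma smul_coefs p q n : smul (coefs p) (coefs q) n = (p * q)`_n.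
Proof. exact: smul_polyE. Qed.

Lemma smulCl (c : F) u n : smul (coefs c%:P) u n = c * u n.
Proof.
rewrite /smul big_ord_recl /= subn0 /coefs coefC eqxx big1 ?addr0 // => i _.
by rewrite coefC /= mul0r.
Qed.

Lemma smulCr (c : F) u n : smul u (coefs c%:P) n = u n * c.
Proof. by rewrite smulC smulCl mulrC. Qed.

Lemma ser_vanishM u v k m :
  ser_vanish k u -> ser_vanish m v -> ser_vanish (k + m) (smul u v).
Proof.
move=> hu hv n hn; rewrite /smul big1 // => i _.
have [hik|hik] := ltnP i k; first by rewrite hu ?mul0r.
rewrite hv ?mulr0 //; have := ltn_ord i; lia.
Qed.

Lemma smul_vanish_coef u v k m :
  ser_vanish k u -> ser_vanish m v -> smul u v (k + m)%N = u k * v m.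
Proof.
move=> hu hv; rewrite /smul (bigD1 (Ordinal (ltn_addr m (ltnSn k)))) //=.
rewrite addKn big1 ?addr0 // => i /eqP hi.
have [hik|hik] := ltnP i k; first by rewrite hu ?mul0r.
have hne : nat_of_ord i != k by apply/eqP=> e; apply: hi; apply: val_inj.
rewrite hv ?mulr0 //; move: (ltn_ord i) hne hik; move: (nat_of_ord i) => j; lia.
Qed.

Lemma ser_ordM u v k m : ser_ord u k -> ser_ord v m -> ser_ord (smul u v) (k + m).
Proof.
move=> [hu0 hu] [hv0 hv]; split; last exact: ser_vanishM.
by rewrite smul_vanish_coef // mulf_neq0.
Qed.

Lemma ser_ord_uniq u k m : ser_ord u k -> ser_ord u m -> k = m.
Proof.
move=> [hk0 hk] [hm0 hm].
have [lt_km|lt_mk|//] := ltngtP k m.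
  by move: hk0; rewrite hm // eqxx.
by move: hm0; rewrite hk // eqxx.
Qed.

Lemma ser_ord_exists u n : u n != 0 -> exists2 k, (k <= n)%N & ser_ord u k.
Proof.
move=> hn; have ex : exists n, u n != 0 by exists n.
case: (ex_minnP ex) => k hk hmin; exists k; [exact: hmin | split]=> // j hj.
by apply/eqP; apply: contraTT hj => hj; rewrite -leqNgt; apply: hmin.
Qed.

Lemma ser_vanish_ord_le u m k : ser_vanish m u -> ser_ord u k -> (m <= k)%N.
Proof. by move=> hm [hk _]; rewrite leqNgt; apply: contra hk => /hm ->. Qed.

Lemma ser_vanish_scale u (c : F) m :
  c != 0 -> ser_vanish m (fun n => u n * c) -> ser_vanish m u.
Proof. by move=> hc h n /h /eqP; rewrite mulf_eq0 (negbTE hc) orbF => /eqP. Qed.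

Lemma eq_ser_ord u v k : (forall n, u n = v n) -> ser_ord u k -> ser_ord v k.
Proof. by move=> e [h0 h]; split=> [|n hn]; rewrite -e // h. Qed.

(* [v 0 != 0] makes [v] a unit of the power series ring *)
Lemma ser_vanish_cancel u v m :
  ser_vanish m (smul u v) -> v 0%N != 0 -> ser_vanish m u.
Proof.
move=> huv hv0 n hn; apply/eqP; apply/negPn/negP => hun.
have [k hkn hk] := ser_ord_exists hun.
have hv : ser_ord v 0 by split.
have [] := ser_ordM hk hv.
by rewrite addn0 huv ?eqxx //; apply: leq_ltn_trans hn.
Qed.

Lemma smul_odd u v : (forall i, odd i -> u i = 0) -> (forall i, odd i -> v i = 0) ->
  forall m, odd m -> smul u v m = 0.
Proof.
move=> hu hv m hm; rewrite /smul big1 // => i _.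
case: (boolP (odd i)) => hi; first by rewrite hu ?mul0r.
rewrite hv ?mulr0 //; have := ltn_ord i; rewrite ltnS => hle.
by rewrite oddB // hm (negbTE hi).
Qed.

Lemma ser_vanish_even_odd u v m :
  (forall i, odd i -> u i = 0) -> (forall i, odd i -> v i = 0) ->
  ser_vanish m.*2 (sadd u (sshift v)) -> ser_vanish m.*2 u /\ ser_vanish m.*2 v.
Proof.
move=> hu hv h; split=> n hn.
  case: (boolP (odd n)) => [/hu //|ho].
  have := h n hn; rewrite /sadd /sshift.
  case: n hn ho => [|n] _ ho; first by rewrite addr0.
  by rewrite hv ?addr0 //; move: ho; rewrite /= negbK.
case: (boolP (odd n)) => [/hv //|ho].
have hn1 : (n.+1 < m.*2)%N.
  rewrite ltn_neqAle hn andbT; apply: contraNneq ho => e.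
  by have := odd_double m; rewrite -e /= => /negbFE.
by have := h n.+1 hn1; rewrite /sadd /sshift hu ?add0r //= ho.
Qed.

Lemma coefs_ord_XnM p m k : ser_ord (coefs p) k -> ser_ord (coefs ('X^m * p)) (m + k).
Proof.
move=> [h0 h]; split; first by rewrite /coefs coefXnM ltnNge leq_addr addKn.
move=> n hn; rewrite /coefs coefXnM; case: ifP => // hnm.
by apply: h; move: hnm hn; lia.
Qed.

Lemma smul_ord_exists u v k : ser_ord (smul u v) k -> exists j, ser_ord v j.
Proof.
case=> hk _; case: (pickP (fun i : 'I_k.+1 => v (k - i)%N != 0)) => [i hi|h0].
  by have [j _ hj] := ser_ord_exists hi; exists j.
move: hk; rewrite /smul big1 ?eqxx // => i _.
by move/negbFE/eqP: (h0 i) => ->; rewrite mulr0.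
Qed.

Lemma coefs_ord_exists p : p != 0 -> exists k, ser_ord (coefs p) k.
Proof.
move=> hp; have : coefs p (size p).-1 != 0 by rewrite /coefs -lead_coefE lead_coef_eq0.
by case/ser_ord_exists => k _ hk; exists k.
Qed.

End PowerSeries.

(** * Square roots of power series *)

Section SquareRoot.
Variable F : numClosedFieldType.
Implicit Types (g u v : ser F) (c : F).

Lemma size_sqs_seq g c m : size (sqs_seq g c m) = m.
Proof. by elim: m => //= m IH; rewrite size_rcons IH. Qed.

Lemma sqs_seq_nth g c m i : (i < m)%N -> (sqs_seq g c m)`_i = sqs g c i.
Proof.
elim: m => // m IH hi.
have [->|hne] := eqVneq i m; first by [].
have him : (i < m)%N by rewrite ltn_neqAle hne -ltnS.
by rewrite /= nth_rcons size_sqs_seq him IH.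
Qed.

Lemma sqs_rec g c n : sqs g c n.+1 =
  (g n.+1 - \sum_(i < n) sqs g c i.+1 * sqs g c (n - i)%N) / (c *+ 2).
Proof.
rewrite {1}/sqs.
have -> : sqs_seq g c n.+2 = rcons (sqs_seq g c n.+1) ((g n.+1 -
   \sum_(1 <= i < n.+1) (sqs_seq g c n.+1)`_i * (sqs_seq g c n.+1)`_(n.+1 - i)) / (c *+ 2))
  by [].
rewrite nth_rcons size_sqs_seq ltnn eqxx; congr ((_ - _) / _).
rewrite big_add1 succnK big_mkord; apply: eq_bigr => i _.
have hi := ltn_ord i.
by rewrite subSS !sqs_seq_nth //; lia.
Qed.

Lemma sqs_sqr g c n : c ^+ 2 = g 0%N -> c != 0 -> smul (sqs g c) (sqs g c) n = g n.
Proof.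
move=> hc hc0; case: n => [|n]; first by rewrite /smul big_ord1 -expr2.
have h2c : c *+ 2 != 0 by rewrite mulrn_eq0 negb_or hc0.
rewrite /smul big_ord_recl big_ord_recr /= !subn0 subnn.
rewrite (eq_bigr (fun i : 'I_n => sqs g c i.+1 * sqs g c (n - i)%N)); last first.
  by move=> i _; rewrite /bump /= add1n subSS.
rewrite /bump /= add1n sqs_rec.
set S := \sum_(i < n) _.
have -> : c * ((g n.+1 - S) / (c *+ 2)) + (S + (g n.+1 - S) / (c *+ 2) * c) =
  (c *+ 2) * ((g n.+1 - S) / (c *+ 2)) + S by rewrite mulr2n; ring.
by rewrite mulrC divfK // subrK.
Qed.

Lemma sqsN g c n : sqs g (- c) n = - sqs g c n.
Proof.
elim/ltn_ind: n => -[|n] IH //; rewrite !sqs_rec.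
have -> : \sum_(i < n) sqs g (- c) i.+1 * sqs g (- c) (n - i)%N =
    \sum_(i < n) sqs g c i.+1 * sqs g c (n - i)%N.
  by apply: eq_bigr => i _; rewrite !IH ?mulrNN //; have := ltn_ord i; lia.
by rewrite mulNrn invrN mulrN.
Qed.

Lemma sqs_odd g c n : (forall k, odd k -> g k = 0) -> odd n -> sqs g c n = 0.
Proof.
move=> hg; elim/ltn_ind: n => -[|n] IH //= hn.
rewrite sqs_rec hg //= big1 ?subr0 ?mul0r // => i _.
have hi := ltn_ord i.
case: (boolP (odd i.+1)) => ho; first by rewrite IH ?mul0r.
rewrite (IH (n - i)%N) ?mulr0 //; first by lia.
by move: hn ho; rewrite /= oddB; [case: (odd n); case: (odd i) | lia].
Qed.

Lemma vanish_sqs_pm u v g c m :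
  ser_vanish m (sadd u (smul v (sqs g c))) ->
  ser_vanish m (sadd u (smul v (sqs g (- c)))) ->
  ser_vanish m u /\ ser_vanish m (smul v (sqs g c)).
Proof.
move=> hp hm; suff h n : (n < m)%N -> u n = 0 /\ smul v (sqs g c) n = 0.
  by split=> n /h [].
move=> hn; apply: add_sub_eq0; first exact: hp.
rewrite -(hm n hn) /sadd; congr (_ + _).
by rewrite -smulNr; apply: eq_smul => // i _; rewrite sqsN.
Qed.

End SquareRoot.

(** * Laurent series *)

Section Laurent.
Variable F : numClosedFieldType.
Implicit Types (a b : lser F) (u v : ser F) (p q : {poly F}).

Definition lvanish a (s : int) := forall z, z < s -> lcoef a z = 0.

(* [a] equals [t^s u(t)]; unlike [LS s u] this does not fix the shift [lsh a]. *)
Definition lrep (s : int) u a := lvanish a s /\ forall n : nat, lcoef a (s + n%:Z) = u n.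

Lemma lcoef_lt_lsh a z : z < lsh a -> lcoef a z = 0.
Proof. by move=> h; rewrite /lcoef; case: ifP => // h'; lia. Qed.

Lemma lcoef_lsh a (n : nat) : lcoef a (lsh a + n%:Z) = lco a n.
Proof. by rewrite /lcoef ifT; [congr (lco a _) | ]; lia. Qed.

Lemma lrep_LS a : lrep (lsh a) (lco a) a.
Proof. by split; [move=> z; apply: lcoef_lt_lsh | apply: lcoef_lsh]. Qed.

Lemma eq_lrep s u v a : lrep s u a -> (forall n, u n = v n) -> lrep s v a.
Proof. by move=> [h0 h] e; split=> // n; rewrite h. Qed.

Lemma lrep_shift s s' u a : s = s' -> lrep s u a -> lrep s' u a.
Proof. by move=> ->. Qed.

Lemma lcoef_ladd a b z : lcoef (ladd a b) z = lcoef a z + lcoef b z.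
Proof.
rewrite {1}/lcoef /ladd /=.
set m := (if lsh a <= lsh b then lsh a else lsh b).
have [hma hmb] : m <= lsh a /\ m <= lsh b by rewrite /m; case: ifP => h; lia.
case: ifP => h; first by have -> : m + (`|z - m|%N)%:Z = z by lia.
by rewrite !lcoef_lt_lsh ?addr0 //; lia.
Qed.

Lemma lrepD s u v a b : lrep s u a -> lrep s v b -> lrep s (sadd u v) (ladd a b).
Proof.
move=> [ha0 ha] [hb0 hb]; split=> [z hz|n]; rewrite lcoef_ladd ?ha ?hb //.
by rewrite ha0 // hb0 // addr0.
Qed.

Lemma lcoef_lconst (c : F) z : lcoef (lconst c) z = if z == 0 then c else 0.
Proof.
rewrite /lcoef /lconst /=; case: ifP => h.
  by have -> : (`|z - 0|%N == 0%N) = (z == 0) by apply/eqP/eqP; lia.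
by have -> : (z == 0) = false by apply/eqP; lia.
Qed.

Lemma lrepC (c : F) : lrep 0 (coefs c%:P) (lconst c).
Proof.
split=> [z hz|n]; rewrite lcoef_lconst.
  by have -> : (z == 0) = false by apply/eqP; lia.
by rewrite /coefs coefC add0r; case: n.
Qed.

Definition lconv (A B : int -> F) (L : int) (K : nat) (z : int) :=
  \sum_(i < K) A (L + i%:Z) * B (z - L - i%:Z).

Lemma lconv_lower A B L K z d : (forall z', z' < L -> A z' = 0) ->
  lconv A B (L - d%:Z) (K + d) z = lconv A B L K z.
Proof.
move=> hA; elim: d => [|d IH]; first by rewrite subr0 addn0.
rewrite -IH addnS /lconv big_ord_recl /= hA ?mul0r ?add0r; last by lia.
by apply: eq_bigr => i _; congr (A _ * B _); rewrite /bump /=; lia.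
Qed.

Lemma lconv_upper A B L M K z : (forall z', z' < M -> B z' = 0) ->
  z - L - M < K%:Z -> forall d, lconv A B L (K + d) z = lconv A B L K z.
Proof.
move=> hB hz; elim=> [|d IH]; first by rewrite addn0.
rewrite addnS /lconv big_ord_recr /= -/(lconv A B L (K + d) z) IH.
by rewrite hB ?mulr0 ?addr0 //; lia.
Qed.

Lemma lcoef_lmul a b z K : z - lsh a - lsh b < K%:Z ->
  lcoef (lmul a b) z = lconv (lcoef a) (lcoef b) (lsh a) K z.
Proof.
move=> hK; have hB z' : z' < lsh b -> lcoef b z' = 0 by apply: lcoef_lt_lsh.
case h: (lsh a + lsh b <= z).
  set k := absz (z - (lsh a + lsh b))%R.
  have -> : K = (k.+1 + (K - k.+1))%N by rewrite /k; lia.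
  rewrite (lconv_upper _ hB); last by rewrite /k; lia.
  have -> : lcoef (lmul a b) z = smul (lco a) (lco b) k by rewrite /lcoef /= h.
  rewrite /smul /lconv; apply: eq_bigr => i _; rewrite -!lcoef_lsh.
  by congr (lcoef a _ * lcoef b _); have := ltn_ord i; rewrite /k; lia.
rewrite lcoef_lt_lsh /=; last by lia.
rewrite -[K]add0n (lconv_upper _ hB); last by lia.
by rewrite /lconv big_ord0.
Qed.

Lemma lcoef_lmul_from a b s z : lvanish a s ->
  exists K0, forall d, lcoef (lmul a b) z = lconv (lcoef a) (lcoef b) s (K0 + d) z.
Proof.
move=> hA; set k1 := absz (z - lsh a - lsh b)%R.
case h: (lsh a <= s).
  set e := absz (s - lsh a)%R; exists k1.+1 => d.
  rewrite (@lcoef_lmul _ _ _ (k1.+1 + d + e)%N); last by rewrite /k1; lia.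
  have -> : lsh a = s - e%:Z by rewrite /e; lia.
  by rewrite lconv_lower.
set e := absz (lsh a - s)%R; exists (k1.+1 + e)%N => d.
rewrite (@lcoef_lmul _ _ _ (k1.+1 + d)%N); last by rewrite /k1; lia.
have -> : (k1.+1 + e + d = k1.+1 + d + e)%N by lia.
have -> : s = lsh a - e%:Z by rewrite /e; lia.
by rewrite lconv_lower // => z'; apply: lcoef_lt_lsh.
Qed.

Lemma lrepM s1 s2 u v a b :
  lrep s1 u a -> lrep s2 v b -> lrep (s1 + s2) (smul u v) (lmul a b).
Proof.
move=> [ha0 ha] [hb0 hb]; split.
  move=> z hz; have [K0 hK] := lcoef_lmul_from b z ha0.
  by rewrite (hK 0%N) /lconv big1 // => i _; rewrite hb0 ?mulr0 //; lia.
move=> n; have [K0 hK] := lcoef_lmul_from b (s1 + s2 + n%:Z) ha0.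
rewrite (hK n.+1) addnC (lconv_upper _ hb0) //; last by lia.
rewrite /lconv /smul; apply: eq_bigr => i _.
by rewrite -ha -hb; congr (lcoef a _ * lcoef b _); have := ltn_ord i; lia.
Qed.

Lemma lrep_lower s u a m : lrep s u a ->
  lrep (s - m%:Z) (fun n => if (n < m)%N then 0 else u (n - m)%N) a.
Proof.
move=> [h0 h]; split=> [z hz|n]; first by apply: h0; lia.
case: ifP => hn; first by apply: h0; lia.
by rewrite -h; congr (lcoef a _); lia.
Qed.

Lemma lrep_lowerX s p a m : lrep s (coefs p) a -> lrep (s - m%:Z) (coefs ('X^m * p)) a.
Proof. by move=> h; apply: eq_lrep (lrep_lower m h) _ => n; rewrite /coefs coefXnM. Qed.

Lemma lrepMP s1 s2 p q a b : lrep s1 (coefs p) a -> lrep s2 (coefs q) b ->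
  lrep (s1 + s2) (coefs (p * q)) (lmul a b).
Proof. by move=> ha hb; apply: eq_lrep (lrepM ha hb) _ => n; rewrite smul_coefs. Qed.

Lemma lrepDP s p q a b : lrep s (coefs p) a -> lrep s (coefs q) b ->
  lrep s (coefs (p + q)) (ladd a b).
Proof. by move=> ha hb; apply: eq_lrep (lrepD ha hb) _ => n; rewrite /sadd /coefs coefD. Qed.

Lemma lrepXP s p a n : lrep s (coefs p) a -> lrep (s * n%:Z) (coefs (p ^+ n)) (lpow a n).
Proof.
move=> h; elim: n => [|n IH]; first by rewrite mulr0 expr0; apply: lrepC.
rewrite /lpow iterS -/(lpow a n) exprS.
by apply: lrep_shift (lrepMP h IH); lia.
Qed.

Lemma lrep_leval p q X : lrep 0 (coefs q) X -> lrep 0 (coefs (p \Po q)) (leval p X).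
Proof.
move=> hX; rewrite comp_polyE /leval.
apply: (big_rec2 (fun x y => lrep 0 (coefs y) x)).
  by apply: eq_lrep (lrepC 0) _ => n; rewrite polyC0.
move=> i y1 y2 _ h; apply: lrepDP => //.
have := lrepMP (lrepC p`_i) (lrepXP i hX).
by rewrite mul0r add0r mul_polyC.
Qed.

Definition recip (D : nat) p : {poly F} := \sum_(i < size p) p`_i *: 'X^(D - i).

Lemma lrep_leval_recip p (D : nat) : (size p <= D.+1)%N ->
  lrep (- D%:Z) (coefs (recip D p)) (leval p (LS (-1) (coefs 1))).
Proof.
move=> hD; rewrite /recip /leval.
apply: (big_rec2 (fun x y => lrep (- D%:Z) (coefs y) x)).
  by have := lrep_lowerX D (lrepC 0); rewrite polyC0 mulr0 sub0r.
move=> i y1 y2 _ h; apply: lrepDP => //.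
have hX : lrep (-1) (coefs 1) (LS (-1) (coefs (1 : {poly F}))) by apply: lrep_LS.
have := lrep_lowerX (D - i) (lrepMP (lrepC p`_i) (lrepXP i hX)).
rewrite expr1n mulr1 [_ * _%:P]mulrC mul_polyC.
by apply: lrep_shift; have := ltn_ord i; lia.
Qed.

Lemma coef_recip D p j : (size p <= D.+1)%N ->
  (recip D p)`_j = if (j <= D)%N && (D - j < size p)%N then p`_(D - j) else 0.
Proof.
move=> hs; rewrite /recip coef_sum.
under eq_bigr do rewrite coefZ coefXn.
case: ifP => [/andP [hj hd]|hn].
  rewrite (bigD1 (Ordinal hd)) //= subKn // eqxx mulr1 big1 ?addr0 // => i /eqP hi.
  case: eqP => [e|]; last by rewrite mulr0.
  have hiD : (i <= D)%N by rewrite -ltnS (leq_trans (ltn_ord i) hs).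
  by case: hi; apply: val_inj; rewrite /= e subKn.
rewrite big1 // => i _; case: eqP => [e|]; last by rewrite mulr0.
have hiD : (i <= D)%N by rewrite -ltnS (leq_trans (ltn_ord i) hs).
by move: hn; rewrite e leq_subr subKn ?ltn_ord.
Qed.

Lemma recip_vanish D p : (size p <= D.+1)%N -> ser_vanish (D.+1 - size p) (coefs (recip D p)).
Proof. by move=> hs n hn; rewrite /coefs coef_recip // ifN //; apply/negP; lia. Qed.

Lemma recip_ord D p : (size p <= D.+1)%N -> p != 0 ->
  ser_ord (coefs (recip D p)) (D.+1 - size p).
Proof.
move=> hs hp; split; last exact: recip_vanish.
have hs0 : (0 < size p)%N by rewrite size_poly_gt0.
rewrite /coefs coef_recip // ifT; last by apply/andP; split; lia.
have -> : (D - (D.+1 - size p) = (size p).-1)%N by lia.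
by rewrite -lead_coefE lead_coef_eq0.
Qed.

Lemma lrep_lorder s u a k : lrep s u a -> ser_ord u k -> lorder a (s + k%:Z).
Proof.
move=> [ha0 ha] [hk0 hk]; split; first by rewrite ha.
move=> z hz; case: (ltP z s) => hzs; first exact: ha0.
have -> : z = s + (absz (z - s)%R)%:Z by lia.
by rewrite ha hk //; lia.
Qed.

Lemma lorder_lrep s u a z : lrep s u a -> lorder a z ->
  exists2 k : nat, z = s + k%:Z & ser_ord u k.
Proof.
move=> [ha0 ha] [hz0 hz].
case: (ltP z s) => hzs; first by move: hz0; rewrite ha0 // eqxx.
exists (absz (z - s)%R); first by lia.
split; first by rewrite -ha; have -> : s + (absz (z - s)%R)%:Z = z by lia.
by move=> n hn; rewrite -ha hz //; lia.
Qed.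

End Laurent.

(** * Polynomials around a point *)

Section PolyShift.
Variable R : fieldType.
Implicit Types p q : {poly R}.

Lemma comp_XsubC_XaddC (a : R) : ('X - a%:P) \Po ('X + a%:P) = 'X.
Proof. by rewrite comp_polyB comp_polyX comp_polyC addrK. Qed.

Lemma coef0_comp_XaddC (a : R) p : (p \Po ('X + a%:P))`_0 = p.[a].
Proof. by rewrite -horner_coef0 horner_comp !hornerE. Qed.

Lemma dvdp_exp_XsubC (a : R) p k :
  ('X - a%:P) ^+ k %| p <-> (forall i, (i < k)%N -> (p \Po ('X + a%:P))`_i = 0).
Proof.
split=> [|h].
  by case/dvdpP=> q -> i hi; rewrite comp_polyM rmorphXn /= comp_XsubC_XaddC coefMXn hi.
set p' := p \Po ('X + a%:P).
have ht : take_poly k p' = 0.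
  by apply/polyP => i; rewrite coef_take_poly coef0; case: ifP => // /h.
have -> : p = (drop_poly k p' \Po ('X - a%:P)) * ('X - a%:P) ^+ k.
  rewrite -{1}(comp_polyXaddC_K p a) -/p' -{1}(poly_take_drop k p') ht add0r.
  by rewrite comp_polyM comp_Xn_poly.
exact: dvdp_mull.
Qed.

Lemma coef_comp_XaddC_X2 (a : R) p i :
  (p \Po (a%:P + 'X ^+ 2))`_i = if odd i then 0 else (p \Po ('X + a%:P))`_(i./2).
Proof.
have -> : p \Po (a%:P + 'X ^+ 2) = (p \Po ('X + a%:P)) \Po 'X^2.
  by rewrite -comp_polyA comp_polyD comp_polyX comp_polyC addrC.
by rewrite coef_comp_poly_Xn // dvdn2 divn2; case: (odd i).
Qed.

Lemma separable_divp_XsubC_root (f : {poly R}) (a : R) :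
  separable_poly f -> root f a -> (f %/ ('X - a%:P)).[a] != 0.
Proof.
move=> hs hfa; have hd : ('X - a%:P) %| f by rewrite -root_factor_theorem.
by move: hs; rewrite -{1}(divpK hd) separable_root => /andP [_].
Qed.

Lemma dvdp_size_quot (P f Q : {poly R}) m : f != 0 -> Q %| P * f ->
  (P != 0 -> (size P + m <= size Q)%N) -> exists2 p, P * f = Q * p & (size p <= size f - m)%N.
Proof.
move=> hf hd hs; exists (P * f %/ Q); first by rewrite [Q * _]mulrC divpK.
have [->|hP] := eqVneq P 0; first by rewrite mul0r div0p size_poly0.
set p := P * f %/ Q; have hp : P * f = p * Q by rewrite divpK.
have hP0 : (0 < size P)%N by rewrite size_poly_gt0.
have hQ : Q != 0 by rewrite -size_poly_gt0; have := hs hP; lia.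
have hp0 : p != 0.
  by move: (mulf_neq0 hP hf); rewrite hp; apply: contra_neq => ->; rewrite mul0r.
have := congr1 (fun x : {poly R} => size x) hp; rewrite /= !size_mul //.
have := hs hP; have := size_poly_gt0 p; rewrite hp0.
by move: (size P) (size p) (size Q) (size f) hP0 => x y z t; lia.
Qed.

End PolyShift.

Lemma dvdp_local (C : closedFieldType) (q r : {poly C}) : q != 0 ->
  (forall (a : C) k, ('X - a%:P) ^+ k %| q -> ('X - a%:P) ^+ k %| r) -> q %| r.
Proof.
move: {2}(size q) (leqnn (size q)) => n; elim: n q r => [|n IH] q r.
  by rewrite size_poly_leq0 => /eqP -> /eqP.
move=> hs hq hloc; case: (boolP (size q == 1%N)) => hs1.
  by move/size_poly1P: hs1 => [c hc ->]; rewrite -[c%:P]mulr1 mul_polyC dvdpZl // dvd1p.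
have [a /factor_theorem [q' eq]] := closed_rootP q hs1.
have hq' : q' != 0 by move: hq; rewrite eq mulf_eq0 negb_or => /andP [].
have [r' er] : exists r', r = r' * ('X - a%:P).
  by apply/dvdpP; have := hloc a 1%N; rewrite !expr1 eq dvdp_mull // => /(_ isT).
rewrite eq er dvdp_mul2r ?polyXsubC_eq0 //; apply: IH => //.
  have hsz : size q = (size q').+1 by rewrite eq size_mul ?polyXsubC_eq0 // size_XsubC addn2.
  by move: hs; rewrite hsz.
move=> b k; case: (eqVneq b a) => [->|hab] hk.
  by have := hloc a k.+1; rewrite eq er exprSr !dvdp_mul2r ?polyXsubC_eq0 //; apply.
have : ('X - b%:P) ^+ k %| r by apply: hloc; rewrite eq dvdp_mulr.
rewrite er Gauss_dvdpl //; apply: coprimep_expl.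
by apply: coprimep_XsubC2; rewrite subr_eq0 eq_sym.
Qed.

(** * Local expansions on the curve *)

Section LocalExpansions.
Variable F : numClosedFieldType.
Implicit Types f : {poly F}.

Definition rad_inf f : ser F := fun n => if (n <= 8)%N then f`_(8 - n) else 0.

Lemma lrep_qnum_aff f k (P0 P1 Q : {poly F}) (a b : F) : b != 0 ->
  lrep 0 (sadd (coefs (P0 \Po ('X + a%:P)))
               (smul (coefs (P1 \Po ('X + a%:P))) (sqs (coefs (f \Po ('X + a%:P))) b)))
     (qnum f k (RF P0 P1 Q) (Aff a b)).
Proof.
move=> hb; rewrite /qnum /= hb /=.
have hX : lrep 0 (coefs ('X + a%:P)) (LS 0 (coefs (a%:P + 'X))).
  by rewrite addrC; apply: lrep_LS.
have hY := lrep_LS (LS 0 (sqs (coefs (f \Po ('X + a%:P))) b)).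
have hs := lrepD (lrep_leval P0 hX) (lrep_shift (addr0 0) (lrepM (lrep_leval P1 hX) hY)).
apply: eq_lrep (lrep_shift _ (lrepM hs (lrepXP k (lrepC (1 : F))))) _.
  by rewrite mul0r addr0.
by move=> n; rewrite expr1n smulCr mulr1.
Qed.

Lemma lrep_qden_aff (h : rfun F) (a b : F) : b != 0 ->
  lrep 0 (coefs (rQ h \Po ('X + a%:P))) (qden h (Aff a b)).
Proof.
move=> hb; rewrite /qden /= hb; apply: lrep_leval.
by rewrite addrC; apply: lrep_LS.
Qed.

Lemma lrep_qnum_branch f k (P0 P1 Q : {poly F}) (a : F) :
  lrep k%:Z (fun n => sadd (coefs (P0 \Po (a%:P + 'X ^+ 2)))
     (sshift (smul (coefs (P1 \Po (a%:P + 'X ^+ 2)))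
       (sqs (fun n => if odd n then 0 else ((f %/ ('X - a%:P)) \Po ('X + a%:P))`_n./2)
            (sqrtC (f %/ ('X - a%:P)).[a])))) n * 2 ^+ k)
   (qnum f k (RF P0 P1 Q) (Aff a 0)).
Proof.
rewrite /qnum /= eqxx /=.
have hX := lrep_LS (LS 0 (coefs (a%:P + 'X ^+ 2))).
set S := sqs _ _.
have hOY := lrep_lower 1 (lrepM (lrep_leval P1 hX) (lrep_LS (LS 1 S))).
have hs := lrepD (lrep_leval P0 hX) (lrep_shift (_ : _ = 0) hOY).
have hd := lrepXP k (lrep_LS (LS 1 (coefs (2%:P : {poly F})))).
apply: eq_lrep (lrep_shift _ (lrepM (hs _) hd)) _; try by rewrite /=; lia.
move=> n; rewrite -rmorphXn smulCr; congr (_ * _).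
by rewrite /sadd /sshift; case: n => // n; rewrite subn1.
Qed.

Lemma lrep_qden_branch (h : rfun F) (a : F) :
  lrep 0 (coefs (rQ h \Po (a%:P + 'X ^+ 2))) (qden h (Aff a 0)).
Proof. by rewrite /qden /= eqxx /=; apply/lrep_leval/lrep_LS. Qed.

Lemma lrep_qnum_inf f k (P0 P1 Q : {poly F}) (c : F) D :
  (size P0 <= D.+1)%N -> (size P1 <= D.+1)%N ->
  lrep (- D%:Z - 4 - 2 * k%:Z)
    (fun n => sadd (coefs ('X^4 * recip D P0))
                   (smul (coefs (recip D P1)) (sqs (rad_inf f) c)) n * (-1) ^+ k)
    (qnum f k (RF P0 P1 Q) (Inf c)).
Proof.
move=> hP0 hP1; rewrite /qnum /=.
have hY := lrep_LS (LS (-4) (sqs (rad_inf f) c)).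
have hs := lrepD (lrep_lowerX 4 (lrep_leval_recip hP0))
  (lrep_shift (_ : _ = - D%:Z - 4) (lrepM (lrep_leval_recip hP1) hY)).
have hd := lrepXP k (lrep_LS (LS (-2) (coefs (-1 : {poly F})))).
apply: eq_lrep (lrep_shift _ (lrepM (hs _) hd)) _; try by rewrite /=; lia.
by move=> n; rewrite -polyCN -rmorphXn smulCr.
Qed.

Lemma lrep_qden_inf (h : rfun F) (c : F) D : (size (rQ h) <= D.+1)%N ->
  lrep (- D%:Z) (coefs (recip D (rQ h))) (qden h (Inf c)).
Proof. exact: lrep_leval_recip. Qed.

End LocalExpansions.

(** * Holomorphic 2-differentials *)

Section Holomorphic.
Variable F : numClosedFieldType.
Implicit Types (f p r : {poly F}) (h : rfun F) (u v : ser F).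

Lemma qord_lrep f k h (P : hpoint F) s u s' v z :
  lrep s u (qnum f k h P) -> lrep s' v (qden h P) -> qord f k h P z ->
  exists kn kd : nat, [/\ ser_ord u kn, ser_ord v kd & z = s + kn%:Z - (s' + kd%:Z)].
Proof.
move=> hu hv [zn [zd [hzn hzd ->]]].
have [kn -> hkn] := lorder_lrep hu hzn.
have [kd -> hkd] := lorder_lrep hv hzd.
by exists kn, kd.
Qed.

Lemma lrep_qord f k h (P : hpoint F) s u s' v (kn kd : nat) :
  lrep s u (qnum f k h P) -> lrep s' v (qden h P) -> ser_ord u kn -> ser_ord v kd ->
  qord f k h P (s + kn%:Z - (s' + kd%:Z)).
Proof.
by move=> hu hv hkn hkd; exists (s + kn%:Z), (s' + kd%:Z);
  split; [apply: lrep_lorder hu hkn | apply: lrep_lorder hv hkd |].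
Qed.

Lemma qord_ge0 f k h (P : hpoint F) s u s' v (kd m : nat) z :
  lrep s u (qnum f k h P) -> lrep s' v (qden h P) -> ser_ord v kd -> ser_vanish m u ->
  s' + kd%:Z <= s + m%:Z -> qord f k h P z -> 0 <= z.
Proof.
move=> hu hv hkd hm hle /(qord_lrep hu hv) [kn [kd' [hkn hkd' ->]]].
by rewrite (ser_ord_uniq hkd' hkd); have := ser_vanish_ord_le hm hkn; lia.
Qed.

Lemma holo_qnum_vanish f k h (P : hpoint F) s u s' v (kd m : nat) :
  holo_qdiff f k h -> on_curve f P -> lrep s u (qnum f k h P) -> lrep s' v (qden h P) ->
  ser_ord v kd -> s + m%:Z <= s' + kd%:Z -> ser_vanish m u.
Proof.
move=> [_ hh] hP hu hv hkd hle n hn; apply/eqP/negPn/negP => hne.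
have [kn hknn hkn] := ser_ord_exists hne.
by have := hh P hP _ (lrep_qord hu hv hkn hkd); lia.
Qed.

Lemma holo2_dvdp_nonbranch f (P0 P1 Q : {poly F}) (a : F) k :
  holo_qdiff f 2 (RF P0 P1 Q) -> Q != 0 -> ~~ root f a ->
  ('X - a%:P) ^+ k %| Q -> ('X - a%:P) ^+ k %| P0 /\ ('X - a%:P) ^+ k %| P1.
Proof.
move=> hh hQ hfa /dvdp_exp_XsubC hk.
set b := sqrtC f.[a]; have hb : b != 0 by rewrite sqrtC_eq0.
have [kq hkq] : exists kq, ser_ord (coefs (Q \Po ('X + a%:P))) kq.
  by apply: coefs_ord_exists; rewrite comp_poly2_eq0 ?size_XaddC.
have hkkq := ser_vanish_ord_le hk hkq.
have hvan c : c ^+ 2 = f.[a] -> c != 0 -> ser_vanish kq (sadd (coefs (P0 \Po ('X + a%:P)))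
    (smul (coefs (P1 \Po ('X + a%:P))) (sqs (coefs (f \Po ('X + a%:P))) c))).
  move=> hc hc0; apply: (holo_qnum_vanish hh (hc : on_curve f (Aff a c))
    (lrep_qnum_aff f 2 P0 P1 Q a hc0) (lrep_qden_aff _ a hc0) hkq); lia.
have hb' : (- b) ^+ 2 = f.[a] by rewrite sqrrN sqrtCK.
have hb0' : - b != 0 by rewrite oppr_eq0.
have [h0 h1] := vanish_sqs_pm (hvan b (sqrtCK _) hb) (hvan _ hb' hb0').
have {}h1 := ser_vanish_cancel h1 hb.
by split; apply/dvdp_exp_XsubC => i hi; [apply: h0 | apply: h1]; apply: leq_trans hkkq.
Qed.

Lemma holo2_dvdp_branch f (P0 P1 Q : {poly F}) (a : F) k : separable_poly f ->
  holo_qdiff f 2 (RF P0 P1 Q) -> Q != 0 -> root f a ->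
  ('X - a%:P) ^+ k.+1 %| Q -> ('X - a%:P) ^+ k %| P0 /\ ('X - a%:P) ^+ k %| P1.
Proof.
move=> hs hh hQ hfa /dvdp_exp_XsubC hk.
have hP : on_curve f (Aff a 0) by rewrite /= (rootP hfa) expr0n.
have [kq hkq] : exists kq, ser_ord (coefs (Q \Po (a%:P + 'X ^+ 2))) kq.
  by apply: coefs_ord_exists; rewrite comp_poly_eq0 // addrC size_XnaddC.
have hkkq : (k.+1.*2 <= kq)%N.
  apply: ser_vanish_ord_le hkq => i hi; rewrite /coefs coef_comp_XaddC_X2.
  by case: ifP => // _; apply: hk; rewrite ltn_half_double.
pose S := sqs (fun n => if odd n then 0 else ((f %/ ('X - a%:P)) \Po ('X + a%:P))`_n./2)
  (sqrtC (f %/ ('X - a%:P)).[a]).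
have hS0 : S 0%N != 0 by rewrite sqrtC_eq0 separable_divp_XsubC_root.
have hSodd i : odd i -> S i = 0 by apply: sqs_odd => j ->.
have hodd p i : odd i -> coefs (p \Po (a%:P + 'X ^+ 2)) i = 0.
  by rewrite /coefs coef_comp_XaddC_X2 => ->.
have hvan : ser_vanish k.*2 (sadd (coefs (P0 \Po (a%:P + 'X ^+ 2)))
    (sshift (smul (coefs (P1 \Po (a%:P + 'X ^+ 2))) S))).
  apply: (ser_vanish_scale (c := 2 ^+ 2)); first by rewrite expf_neq0 // pnatr_eq0.
  apply: (holo_qnum_vanish hh hP (lrep_qnum_branch f 2 P0 P1 Q a) (lrep_qden_branch _ a) hkq).
  by move: hkkq; rewrite -!muln2; lia.
have [h0 h1] := ser_vanish_even_odd (hodd P0) (smul_odd (hodd P1) hSodd) hvan.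
have {}h1 := ser_vanish_cancel h1 hS0.
split; apply/dvdp_exp_XsubC => j hj.
  by have := h0 j.*2; rewrite /coefs coef_comp_XaddC_X2 odd_double doubleK ltn_double; apply.
by have := h1 j.*2; rewrite /coefs coef_comp_XaddC_X2 odd_double doubleK ltn_double; apply.
Qed.

Lemma holo2_size_inf f (P0 P1 Q : {poly F}) :
  size f = 9%N -> holo_qdiff f 2 (RF P0 P1 Q) -> Q != 0 ->
  (P0 != 0 -> (size P0 + 4 <= size Q)%N) /\ (P1 != 0 -> (size P1 + 8 <= size Q)%N).
Proof.
move=> hf hh hQ.
set c := sqrtC (lead_coef f).
have hc : c != 0 by rewrite sqrtC_eq0 lead_coef_eq0 -size_poly_gt0 hf.
set D := (size P0 + size P1 + size Q)%N.
have hs0 : (size P0 <= D.+1)%N by rewrite /D; lia.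
have hs1 : (size P1 <= D.+1)%N by rewrite /D; lia.
have hsQ : (size Q <= D.+1)%N by rewrite /D; lia.
set M := (D.+1 - size Q + 8)%N.
have hvan c' : c' ^+ 2 = lead_coef f -> c' != 0 -> ser_vanish M
    (sadd (coefs ('X^4 * recip D P0)) (smul (coefs (recip D P1)) (sqs (rad_inf f) c'))).
  move=> hc' hc0; apply: (ser_vanish_scale (c := (-1) ^+ 2)).
    by rewrite sqrrN expr1n oner_eq0.
  apply: (holo_qnum_vanish hh (hc' : on_curve f (Inf c')) (lrep_qnum_inf f 2 Q c' hs0 hs1)
    (@lrep_qden_inf _ (RF P0 P1 Q) c' D hsQ) (recip_ord hsQ hQ)).
  by rewrite /M; lia.
have hc' : (- c) ^+ 2 = lead_coef f by rewrite sqrrN sqrtCK.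
have hc0' : - c != 0 by rewrite oppr_eq0.
have [h0 h1] := vanish_sqs_pm (hvan c (sqrtCK _) hc) (hvan _ hc' hc0').
have {}h1 := ser_vanish_cancel h1 hc.
split=> hP.
  by have := ser_vanish_ord_le h0 (coefs_ord_XnM 4 (recip_ord hs0 hP)); rewrite /M; lia.
by have := ser_vanish_ord_le h1 (recip_ord hs1 hP); rewrite /M; lia.
Qed.

Lemma holo2_dvdp f (P0 P1 Q : {poly F}) : separable_poly f ->
  holo_qdiff f 2 (RF P0 P1 Q) -> Q != 0 -> Q %| P0 * f /\ Q %| P1 * f.
Proof.
move=> hs hh hQ.
suff loc a k : ('X - a%:P) ^+ k %| Q ->
    ('X - a%:P) ^+ k %| P0 * f /\ ('X - a%:P) ^+ k %| P1 * f.
  by split; apply: dvdp_local => // a k /loc [].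
move=> hk; have [hfa|hfa] := boolP (root f a); last first.
  by have [h0 h1] := holo2_dvdp_nonbranch hh hQ hfa hk; split; apply: dvdp_mulr.
case: k hk => [|k] hk; first by rewrite expr0 !dvd1p.
have [h0 h1] := holo2_dvdp_branch hs hh hQ hfa hk.
have hd : ('X - a%:P) %| f by rewrite -root_factor_theorem.
by rewrite exprSr; split; apply: dvdp_mul.
Qed.

Lemma holo2_form f (P0 P1 Q : {poly F}) : size f = 9%N -> separable_poly f ->
  holo_qdiff f 2 (RF P0 P1 Q) -> Q != 0 ->
  exists p r, [/\ P0 * f = Q * p, P1 * f = Q * r, (size p <= 5)%N & (size r <= 1)%N].
Proof.
move=> hf hs hh hQ.
have hf0 : f != 0 by rewrite -size_poly_gt0 hf.
have [d0 d1] := holo2_dvdp hs hh hQ.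
have [i0 i1] := holo2_size_inf hf hh hQ.
have [p hp hsp] := dvdp_size_quot hf0 d0 i0.
have [r hr hsr] := dvdp_size_quot hf0 d1 i1.
by rewrite hf in hsp hsr; exists p, r.
Qed.

Lemma coefs_ord_branch f (a : F) : separable_poly f -> root f a ->
  ser_ord (coefs (f \Po (a%:P + 'X ^+ 2))) 2.
Proof.
move=> hs hfa.
have hd : ('X - a%:P) %| f by rewrite -root_factor_theorem.
have ef : f \Po ('X + a%:P) = ((f %/ ('X - a%:P)) \Po ('X + a%:P)) * 'X.
  by rewrite -{1}(divpK hd) comp_polyM comp_XsubC_XaddC.
split; first by rewrite /coefs coef_comp_XaddC_X2 /= ef coefMX /= coef0_comp_XaddC
  separable_divp_XsubC_root.
move=> [|[|]] // _; rewrite /coefs coef_comp_XaddC_X2 //.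
by rewrite -[0./2]/0%N coef0_comp_XaddC; apply/rootP.
Qed.

Lemma coefs_ord0_nonbranch f (a : F) : f.[a] != 0 -> ser_ord (coefs (f \Po ('X + a%:P))) 0.
Proof. by split; rewrite // /coefs coef0_comp_XaddC. Qed.

Lemma holo2_of_form f p r : size f = 9%N -> separable_poly f ->
  (size p <= 5)%N -> (size r <= 1)%N -> holo_qdiff f 2 (RF p r f).
Proof.
move=> hf hs hp hr; have hf0 : f != 0 by rewrite -size_poly_gt0 hf.
split=> // -[a b|c] hP z.
  have [eb|hb] := eqVneq b 0.
    rewrite {}eb in hP *; have hfa : root f a by rewrite /root -hP expr0n.
    apply: (qord_ge0 (lrep_qnum_branch f 2 p r f a) (lrep_qden_branch _ a)
      (coefs_ord_branch hs hfa) (m := 0)) => //; lia.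
  have hfa : f.[a] != 0 by rewrite -hP expf_neq0.
  by apply: (qord_ge0 (lrep_qnum_aff f 2 p r f a hb) (lrep_qden_aff _ a hb)
    (coefs_ord0_nonbranch hfa) (m := 0)).
have hp9 : (size p <= 9)%N by apply: leq_trans hp _.
have hr9 : (size r <= 9)%N by apply: leq_trans hr _.
have hsf : (size f <= 9)%N by rewrite hf.
have hk := recip_ord hsf hf0; rewrite hf subnn in hk.
apply: (qord_ge0 (lrep_qnum_inf f 2 f c hp9 hr9) (@lrep_qden_inf _ (RF p r f) c 8 hsf) hk
  (m := 8)) => //.
have hr8 : ser_vanish 8 (smul (coefs (recip 8 r)) (sqs (rad_inf f) c)).
  by move=> n hn; apply: (ser_vanishM (m := 0) (recip_vanish hr9)) => //; lia.
have hp4 i : (i < 4)%N -> (recip 8 p)`_i = 0 by move=> hi; apply: (recip_vanish hp9); lia.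
move=> n hn; rewrite /sadd hr8 // addr0 /coefs coefXnM; case: ifP; rewrite ?mul0r // => hn4.
by rewrite hp4 ?mul0r //; lia.
Qed.

Lemma holo2_qord_aff f (a b : F) h z : size f = 9%N -> separable_poly f ->
  b ^+ 2 = f.[a] -> b != 0 -> holo_qdiff f 2 h -> qord f 2 h (Aff a b) z ->
  exists p r, [/\ (size p <= 5)%N, (size r <= 1)%N & exists2 k : nat, z = k%:Z &
    ser_ord (sadd (coefs (p \Po ('X + a%:P)))
      (smul (coefs (r \Po ('X + a%:P))) (sqs (coefs (f \Po ('X + a%:P))) b))) k].
Proof.
case: h => P0 P1 Q hf hs hb2 hb hh hq; have hQ : Q != 0 := hh.1.
have [p [r [e0 e1 hp hr]]] := holo2_form hf hs hh hQ.
exists p, r; split=> //.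
have [kn [kd [hkn hkd ->]]] :=
  qord_lrep (lrep_qnum_aff f 2 P0 P1 Q a hb) (lrep_qden_aff _ a hb) hq.
set S := 'X + a%:P; set Y := sqs (coefs (f \Po S)) b.
rewrite -/S -/Y in hkn hkd *.
set V := sadd (coefs (p \Po S)) (smul (coefs (r \Po S)) Y).
have clear_den m : smul (sadd (coefs (P0 \Po S)) (smul (coefs (P1 \Po S)) Y))
    (coefs (f \Po S)) m = smul (coefs (Q \Po S)) V m.
  rewrite smulDl smul_coefs [RHS]smulC /V smulDl smul_coefs.
  rewrite -!comp_polyM e0 [p * Q]mulrC; congr (_ + _); rewrite smulAC [RHS]smulAC.
  rewrite (@eq_smul _ _ (coefs ((P1 * f) \Po S)) _ Y) => [|i _|//]; last first.
    by rewrite smul_coefs comp_polyM.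
  rewrite [RHS](@eq_smul _ _ (coefs ((r * Q) \Po S)) _ Y) => [|i _|//]; last first.
    by rewrite smul_coefs comp_polyM.
  by rewrite e1 mulrC.
have hfa : f.[a] != 0 by rewrite -hb2 expf_neq0.
have hF := coefs_ord0_nonbranch hfa.
have hQV : ser_ord (smul (coefs (Q \Po S)) V) kn.
  by apply: eq_ser_ord clear_den _; have := ser_ordM hkn hF; rewrite addn0.
have [kv hkv] := smul_ord_exists hQV.
exists kv => //; have := ser_ord_uniq hQV (ser_ordM hkd hkv); lia.
Qed.

End Holomorphic.

(** * The point over [w] *)

Section PointOverW.
Variables (F : numClosedFieldType) (f : {poly F}) (w b : F).
Hypotheses (size_f : size f = 9%N) (sep_f : separable_poly f).
Hypotheses (fw_neq0 : f.[w] != 0) (b2_fw : b ^+ 2 = f.[w]).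

Let S : {poly F} := 'X + w%:P.
Let y : ser F := sqs (coefs (f \Po S)) b.

(* The expansion of [y - f_{w,4}(x)] in the local parameter [x - w]. *)
Definition ytail : ser F := fun n => if (n < 5)%N then 0 else y n.

Lemma b_neq0 : b != 0.
Proof. by apply: contraNneq fw_neq0 => b0; rewrite -b2_fw b0 expr0n. Qed.

Lemma comp_taylor4 : taylor4 f w b \Po S = \poly_(i < 5) y i.
Proof.
rewrite /taylor4 poly_def raddf_sum; apply: eq_bigr => i _ /=.
by rewrite comp_polyZ rmorphXn /= comp_XsubC_XaddC.
Qed.

Lemma taylor4E : taylor4 f w b = (\poly_(i < 5) y i) \Po ('X - w%:P).
Proof. by rewrite -comp_taylor4 comp_polyXaddC_K. Qed.

Lemma size_taylor4 : (size (taylor4 f w b) <= 5)%N.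
Proof. by rewrite taylor4E size_comp_poly2 ?size_XsubC // size_poly. Qed.

Lemma y_split n : y n = (\poly_(i < 5) y i)`_n + ytail n.
Proof. by rewrite coef_poly /ytail; case: ifP; rewrite ?addr0 ?add0r. Qed.

Lemma lrep_qnum_ytail k Q :
  lrep 0 ytail (qnum f k (RF (- taylor4 f w b) 1 Q) (Aff w b)).
Proof.
apply: eq_lrep (lrep_qnum_aff f k (- taylor4 f w b) 1 Q w b_neq0) _ => n.
rewrite /sadd -polyC1 comp_polyC smulCl mul1r -sub0r comp_polyB comp_poly0 sub0r.
by rewrite -/S comp_taylor4 -/y /coefs coefN (y_split n) addKr.
Qed.

(* Otherwise [f] would be the square of the polynomial [f_{w,4}]. *)
Lemma ytail_neq0 : exists n, ytail n != 0.
Proof.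
apply: NNPP => hall.
have hy n : y n = (\poly_(i < 5) y i)`_n.
  rewrite y_split; case: (eqVneq (ytail n) 0) => [->|hn]; first by rewrite addr0.
  by case: hall; exists n.
have sq : taylor4 f w b ^+ 2 = f.
  rewrite taylor4E -rmorphXn /= -[RHS](comp_polyXaddC_K _ w); congr (_ \Po _).
  apply/polyP => n.
  rewrite expr2 -(smul_polyE (fun i _ => hy i) (fun i _ => hy i)) sqs_sqr ?b_neq0 //.
  by rewrite /coefs coef0_comp_XaddC b2_fw.
have nosq := separable_nosquare (k := 2) sep_f isT (u := taylor4 f w b).
case: (eqVneq (size (taylor4 f w b)) 1%N) => [/eqP/size_poly1P [c _ ec]|h1].
  by move: size_f; rewrite -sq ec -rmorphXn size_polyC; case: (_ != 0).
by have := nosq h1; rewrite sq dvdpp.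
Qed.

Variable k6 : nat.
Hypothesis ytail_ord : ser_ord ytail k6.

Lemma ser_ord_p_add_ry (p r : {poly F}) k : (size p <= 5)%N -> (size r <= 1)%N ->
  ser_ord (sadd (coefs (p \Po S)) (smul (coefs (r \Po S)) y)) k -> (k < 5)%N \/ k = k6.
Proof.
move=> hp hr; set V := sadd _ _ => hk.
set rc := r`_0; have erS : r \Po S = rc%:P by rewrite (size1_polyC hr) comp_polyC.
set Z := p \Po S + rc *: \poly_(i < 5) y i.
have hVZ j : V j = Z`_j + rc * ytail j.
  by rewrite /V /sadd erS smulCl /Z coefD coefZ (y_split j) mulrDr addrA.
have [Z0|Zn] := eqVneq Z 0.
  have rc0 : rc != 0.
    by apply: contraTneq hk.1 => rc0; rewrite negbK hVZ Z0 rc0 coef0 mul0r addr0.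
  right; apply: ser_ord_uniq hk _; apply: (@eq_ser_ord _ (fun j => rc * ytail j)).
    by move=> j; rewrite hVZ Z0 coef0 add0r.
  by case: ytail_ord => h0 h; split=> [|j /h ->]; rewrite ?mulr0 ?mulf_neq0.
left; have [kz hkz] := coefs_ord_exists Zn.
have hsZ : (size Z <= 5)%N.
  apply: leq_trans (size_add _ _) _; rewrite geq_max size_comp_poly2 ?size_XaddC // hp /=.
  exact: leq_trans (size_scale_leq _ _) (size_poly _ _).
have hkz5 : (kz < 5)%N.
  apply: leq_trans hsZ; rewrite ltnNge; apply: contra hkz.1 => hle.
  by rewrite /coefs nth_default.
have hV5 j : (j < 5)%N -> V j = Z`_j by move=> hj; rewrite hVZ /ytail hj mulr0 addr0.
have hkV : ser_ord V kz.
  case: hkz => h0 h; split; first by rewrite hV5.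
  by move=> j hj; rewrite hV5; [apply: h | apply: ltn_trans hkz5].
by rewrite (ser_ord_uniq hk hkV).
Qed.

Lemma in_qgap_cases n : in_qgap f 2 (Aff w b) n -> (0 < n < 6)%N \/ n = k6.+1.
Proof.
move=> [h [_ hh hq]].
have [p [r [hp hr [k ek hk]]]] := holo2_qord_aff size_f sep_f b2_fw b_neq0 hh hq.
have -> : n = k.+1 by lia.
by case: (ser_ord_p_add_ry hp hr hk) => [|->]; [left | right].
Qed.

Lemma in_qgap_small n : (0 < n < 6)%N -> in_qgap f 2 (Aff w b) n.
Proof.
case/andP => n0 n6; have hf0 : f != 0 by rewrite -size_poly_gt0 size_f.
exists (RF (('X - w%:P) ^+ n.-1) 0 f); split.
- by split=> //; left; rewrite expf_neq0 // polyXsubC_eq0.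
- by apply: holo2_of_form; rewrite ?size_poly0 // size_exp_XsubC; lia.
have hu : ser_ord (sadd (coefs (('X - w%:P) ^+ n.-1 \Po S)) (smul (coefs (0 \Po S)) y)) n.-1.
  apply: (@eq_ser_ord _ (coefs ('X^(n.-1) : {poly F}))).
    by move=> j; rewrite /sadd comp_poly0 -polyC0 smulCl mul0r addr0 rmorphXn /= comp_XsubC_XaddC.
  by split=> [|j hj]; rewrite /coefs coefXn ?eqxx ?oner_eq0 // ltn_eqF.
have := lrep_qord (lrep_qnum_aff f 2 _ 0 f w b_neq0) (lrep_qden_aff _ w b_neq0) hu
  (coefs_ord0_nonbranch fw_neq0).
by rewrite (_ : _ - _ = n%:Z - 1) //; lia.
Qed.

Lemma in_qgap_ytail : in_qgap f 2 (Aff w b) k6.+1.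
Proof.
have hf0 : f != 0 by rewrite -size_poly_gt0 size_f.
exists (RF (- taylor4 f w b) 1 f); split.
- by split=> //; right; apply: oner_neq0.
- by apply: holo2_of_form; rewrite ?size_opp ?size_taylor4 ?size_poly1.
have := lrep_qord (lrep_qnum_ytail 2 f) (lrep_qden_aff _ w b_neq0) ytail_ord
  (coefs_ord0_nonbranch fw_neq0).
by rewrite (_ : _ - _ = k6.+1%:Z - 1) //; lia.
Qed.

Lemma in_qgap_spec n : in_qgap f 2 (Aff w b) n <-> n \in [:: 1; 2; 3; 4; 5; k6.+1]%N.
Proof.
split=> [/in_qgap_cases [/andP [n0 n6]|->]|hn]; rewrite ?inE ?eqxx ?orbT //.
  by move: n0 n6; case: n => [|[|[|[|[|[|]]]]]].
case: (boolP (0 < n < 6)%N) => [/in_qgap_small //|hn6].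
suff -> : n = k6.+1 by apply: in_qgap_ytail.
by move: hn hn6; rewrite !inE; case: n => [|[|[|[|[|[|n]]]]]] //= /eqP.
Qed.

Lemma qord_ytail : qord f 0 (RF (- taylor4 f w b) 1 1) (Aff w b) (k6.+1%:Z - 1).
Proof.
have h1 : (1 : {poly F}).[w] != 0 by rewrite hornerC oner_eq0.
have := lrep_qord (lrep_qnum_ytail 0 1) (lrep_qden_aff _ w b_neq0) ytail_ord
  (coefs_ord0_nonbranch h1).
by rewrite (_ : _ - _ = k6.+1%:Z - 1) //; lia.
Qed.

End PointOverW.

Lemma qweight_gap6 n6 : (5 < n6)%N -> qweight [:: 1; 2; 3; 4; 5; n6]%N = (n6 - 6)%N.
Proof. by move=> h; rewrite /qweight /= !big_ord_recr big_ord0 /=; lia. Qed.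

Theorem mainTheorem3 (F : numClosedFieldType) (f : {poly F}) (w b : F) :
  size f = 9%N -> separable_poly f ->
  f.[w] != 0 -> b ^+ 2 = f.[w] ->
  exists n6 : nat,
    [/\ qord f 0 (RF (- taylor4 f w b) 1 1) (Aff w b) (n6%:Z - 1),
        (forall n, in_qgap f 2 (Aff w b) n <-> n \in [:: 1; 2; 3; 4; 5; n6]%N)
      & (6 < n6)%N ->
        forall gs : seq nat, sorted ltn gs ->
          (forall n, in_qgap f 2 (Aff w b) n <-> n \in gs) ->
          (0 < qweight gs)%N /\ qweight gs = (n6 - 6)%N].
Proof.
move=> size_f sep_f fw_neq0 b2_fw.
have [n0 hn0] := ytail_neq0 size_f sep_f fw_neq0 b2_fw.
have [k6 _ hk6] := ser_ord_exists hn0.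
have gap := in_qgap_spec size_f sep_f fw_neq0 b2_fw hk6.
exists k6.+1; split=> //; first exact: qord_ytail.
move=> h6 gs gs_sorted gs_gap.
have -> : gs = [:: 1; 2; 3; 4; 5; k6.+1]%N.
  apply: (irr_sorted_eq ltn_trans ltnn) => //= [|n]; first by rewrite andbT ltnW.
  by apply/idP/idP => [/(gs_gap n).2/(gap n).1 | /(gap n).2/(gs_gap n).1].
by rewrite qweight_gap6 ?subn_gt0 //; apply: ltnW.
Qed.
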